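(* Under the standing setting (including the assumptions on $a$) and the absorbing-state assumptions (i)–(iv) in the context, there exist $K,c_1>0$, independent of $\mathbf{x}\in\mathbb{R}^N$, $\mathbf{v}\in\chi$, $\lambda>0$ and $t>0$, such that $$\|\mu_t^{\lambda,\mathbf{x},\mathbf{v}}-\tilde\mu_\infty^{\mathbf{x},\mathbf{v}}\|_{TV}\le Ke^{-c_1t\lambda}+Kt.$$
   Context: Let $N\ge1$, $\chi$ a finite set, $a:\mathbb{R}^N\times\chi\to\mathbb{R}^N$ with $a(\cdot,\mathbf{v})$ continuous and bounded for every $\mathbf{v}$ (we additionally assume $a(\cdot,\mathbf{v})$ globally Lipschitz so that all ODEs are well posed), and $\{\mathcal{P}_{\mathbf{x}}\}_{\mathbf{x}\in\mathbb{R}^N}$ a family of transition matrices on $\chi$. For $\lambda>0$, the fully coupled process $(X_t^{\lambda,\mathbf{x},\mathbf{v}},V_t^{\lambda,\mathbf{x},\mathbf{v}})$ on $\mathbb{R}^N\times\chi$ starts at $(\mathbf{x},\mathbf{v})$; $X$ is continuous and solves $\frac{d}{dt}X_t=a(X_t,V_t)$; $V$ is càdlàg, constant between rings of a Poisson clock of rate $\lambda$, and at a ring at time $s$ jumps from $V_{s-}$ to $\mathbf{v}'$ with probability $\mathcal{P}_{X_s}(V_{s-},\mathbf{v}')$. $\mu_t^{\lambda,\mathbf{x},\mathbf{v}}$ is the law of $V_t^{\lambda,\mathbf{x},\mathbf{v}}$. $\tilde V_k^{\mathbf{x},\mathbf{v}}$ is the discrete-time chain with transition matrix $\mathcal{P}_{\mathbf{x}}$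 started at $\mathbf{v}$. Absorbing-state assumptions: there are distinct states $\mathbf{e}^{(1)},\dots,\mathbf{e}^{(L)}\in\chi$ such that (i) each $\mathcal{P}_{\mathbf{x}}$ is stochastic; (ii) $\mathcal{P}_{\mathbf{x}}(\mathbf{e}^{(i)},\mathbf{e}^{(i)})=1$ for all $i,\mathbf{x}$; (iii) there exist $\tilde n\ge1$ and $z_0<1$ with $\mathbb{P}[\tilde V_{\tilde n}^{\mathbf{x},\mathbf{v}}\notin\{\mathbf{e}^{(1)},\dots,\mathbf{e}^{(L)}\}]\le z_0$ for all $\mathbf{x},\mathbf{v}$; (iv) there is $K_0>0$ with $\sum_{\mathbf{v}'}|\mathcal{P}_{\mathbf{x}}(\mathbf{v},\mathbf{v}')-\mathcal{P}_{\mathbf{x}'}(\mathbf{v},\mathbf{v}')|\le K_0\|\mathbf{x}-\mathbf{x}'\|_1$, $\|\mathbf{w}\|_1=\sum_i|w_i|$. $q^i(\mathbf{x},\mathbf{v})$ is the probability that the chain with transition matrix $\mathcal{P}_{\mathbf{x}}$ started at $\mathbf{v}$ is absorbed in $\mathbf{e}^{(i)}$; $\tilde\mu_\infty^{\mathbf{x},\mathbf{v}}$ is the probability measure on $\chi$ with mass $q^i(\mathbf{x},\mathbf{v})$ at $\mathbf{e}^{(i)}$, $1\le i\le L$, and $0$ elsewhere. $\|\mu\|_{TV}:=\sum_{\mathbf{v}'\in\chi}|\mu(\mathbf{v}')|$. *)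

From mathcomp Require Import all_boot all_order all_algebra.
From mathcomp Require Import all_classical all_reals all_analysis.
Set Implicit Arguments. Unset Strict Implicit. Unset Printing Implicit Defensive.
Import Order.TTheory GRing.Theory Num.Theory.
Import numFieldNormedType.Exports.
Local Open Scope classical_set_scope.
Local Open Scope ring_scope.

Section Defs.
Variables (R : realType) (N : nat) (chi : finType).

Definition norm1 (w : 'rV[R]_N) : R := \sum_(i < N) `|w ord0 i|.

Definition stochastic (P : 'rV[R]_N -> chi -> chi -> R) : Prop :=
  forall x v, (forall w, 0 <= P x v w) /\ \sum_(w : chi) P x v w = 1.

(* k-step transition probabilities of the discrete chain with matrix P_x:
   nstep P x k v w = P[ tildeV_k^{x,v} = w ] *)
Fixpoint nstep (P : 'rV[R]_N -> chi -> chi -> R) (x : 'rV[R]_N) (k : nat)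
  (v w : chi) : R :=
  match k with
  | 0 => (v == w)%:R
  | k'.+1 => \sum_(u : chi) P x v u * nstep P x k' u w
  end.

(* absorption probability q^e(x,v) in the absorbing state e:
   P[exists k, tildeV_k = e] = lim_k P[tildeV_k = e] (e absorbing) *)
Definition absorb_prob P x v (e : chi) : R := lim ((fun k => nstep P x k v e) @ \oo).

Definition mu_infty P (E : {set chi}) x v (w : chi) : R :=
  if w \in E then absorb_prob P x v w else 0.

(* Contribution to P[V_t = w] of the paths with exactly n rings of the
   Poisson clock in (tau, t], given that at time tau the process is at
   (y, u).  Between rings X follows the flow of a(., u), here given by
   flow u s y (the position after time s started from y).  The first ring
   after tau has density lam * exp(-lam (s - tau)); at a ring at time s the
   state jumps from u to u' with probability P_{X_s}(u, u'). *)
Fixpoint path_term (P : 'rV[R]_N -> chi -> chi -> R)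
  (flow : chi -> R -> 'rV[R]_N -> 'rV[R]_N) (lam t : R) (w : chi) (n : nat)
  : R -> 'rV[R]_N -> chi -> R :=
  match n with
  | 0 => fun tau _ u => expR (- lam * (t - tau)) * (u == w)%:R
  | n'.+1 => fun tau y u =>
      Rintegral lebesgue_measure `[tau, t]
        (fun s => lam * expR (- lam * (s - tau)) *
           \sum_(u' : chi) P (flow u (s - tau) y) u u' *
              path_term P flow lam t w n' s (flow u (s - tau) y) u')
  end.

Definition mu_t P flow (lam t : R) (x : 'rV[R]_N) (v w : chi) : R :=
  lim ((series (fun n => path_term P flow lam t w n 0 x v)) @ \oo).

Definition TV_dist (mu nu : chi -> R) : R := \sum_(w : chi) `|mu w - nu w|.

End Defs.

(* Between rings of the Poisson clock the position moves with speed at most M, so up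
   to time t it stays within M t of its starting point x, and by (iv) every transition
   matrix used before time t is within K0 M t of P_x in total variation.  Absorbing rows
   do not depend on the position, so only steps taken from non-absorbing states feel
   this perturbation.  Hence, given n rings in [0, t], which has Poisson weight
   e^(-lam t) (lam t)^n / n!, the law of V_t is within K0 M t times the expected number
   of non-absorbed steps of the n-step chain frozen at P_x; and that chain is within its
   non-absorption probability of mu_infty.  By (iii) non-absorption decays like C rho^k,
   so the first error is O(t) uniformly in n, while averaging C rho^n against the
   Poisson weights gives C e^(-lam t (1 - rho)). *)

From mathcomp Require Import all_boot all_order all_algebra.
From mathcomp Require Import all_classical all_reals all_analysis.
From mathcomp Require Import ring lra zify.
Import Order.TTheory GRing.Theory Num.Theory.
Import numFieldNormedType.Exports.
Local Open Scope classical_set_scope.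
Local Open Scope ring_scope.
Set Implicit Arguments. Unset Strict Implicit. Unset Printing Implicit Defensive.

Lemma sum_delta_l (R : pzSemiRingType) (chi : finType) (f : chi -> R) u :
  \sum_(u' : chi) (u == u')%:R * f u' = f u.
Proof.
rewrite (bigD1 u) //= eqxx mul1r big1 ?addr0 // => i /negbTE.
by rewrite eq_sym => ->; rewrite mul0r.
Qed.

Lemma sum_delta_r (R : pzSemiRingType) (chi : finType) (f : chi -> R) u :
  \sum_(u' : chi) f u' * (u' == u)%:R = f u.
Proof.
rewrite (bigD1 u) //= eqxx mulr1 big1 ?addr0 // => i /negbTE ->.
by rewrite mulr0.
Qed.

Lemma bernoulli_ineq (R : realDomainType) (h : R) n : -1 <= h ->
  1 + n%:R * h <= (1 + h) ^+ n.
Proof.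
move=> h1; elim: n => [|n IH]; first by rewrite mul0r addr0 expr0.
have nh2 : 0 <= n%:R * h * h by rewrite -mulrA mulr_ge0 ?ler0n // -expr2 sqr_ge0.
rewrite exprS -natr1; apply: le_trans (ler_wpM2l _ IH); last by lra.
nra.
Qed.

Lemma exists_root_ge (R : realFieldType) (z : R) n : (0 < n)%N -> z < 1 ->
  exists rho : R, [/\ 0 < rho, rho < 1 & z <= rho ^+ n].
Proof.
move=> n_gt0 z1; set z' := Num.max z 2^-1.
have z_le : z <= z' by rewrite le_max lexx.
have z'_ge : 2^-1 <= z' by rewrite le_max lexx orbT.
have z'_lt1 : z' < 1 by rewrite gt_max z1 invf_lt1 ?ltr1n.
have n_pos : 0 < n%:R :> R by rewrite ltr0n.
set h := (1 - z') / n%:R.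
have h_le : h <= 1 - z'.
  by rewrite ler_pdivrMr // ler_pMr ?subr_gt0 ?ler1n.
have h_pos : 0 < h by rewrite divr_gt0 ?subr_gt0.
have nh : n%:R * h = 1 - z' by rewrite mulrC divfK ?lt0r_neq0.
(* Bernoulli gives (1 - h)^n >= 1 - n h = z'; taking z' >= 1/2 keeps 1 - h > 0. *)
exists (1 - h); split; [lra | lra |].
have /(bernoulli_ineq n) : -1 <= - h by lra.
by rewrite mulrN nh; apply: le_trans; lra.
Qed.

Lemma finite_uniform_ub (R : realDomainType) (T : finType) (X : Type) (f : T -> X -> R) :
  (forall v, exists M, forall y, f v y <= M) -> exists M, 0 <= M /\ forall v y, f v y <= M.
Proof.
move=> /fin_all_exists[Mf HMf]; exists (\sum_v `|Mf v|); split; first exact: sumr_ge0.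
move=> v y; apply: le_trans (HMf v y) (le_trans (ler_norm _) _).
by rewrite (bigD1 v) //= lerDl sumr_ge0.
Qed.

Lemma dist_limn_le (R : realType) (u v : R^nat) (l e : R) :
  cvgn u -> v @ \oo --> l -> (forall n, `|u n - v n| <= e) -> `|limn u - l| <= e.
Proof.
move=> u_cvg v_l uv_e.
have uv : (fun n => `|u n - v n|) @ \oo --> `|limn u - l|.
  by apply: cvg_norm; apply: cvgB.
rewrite -(cvg_lim (@Rhausdorff R) uv).
by apply: limr_le; [exact: cvgP uv | exact: nearW].
Qed.

Section AbsorbingChain.
Variables (R : realType) (N : nat) (chi : finType).
Variables (P : 'rV[R]_N -> chi -> chi -> R) (E : {set chi}).
Hypothesis P_stochastic : stochastic P.
Hypothesis P_absorbing : forall e x, e \in E -> P x e e = 1.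

Lemma transition_ge0 x u w : 0 <= P x u w.
Proof. by case: (P_stochastic x u). Qed.

Lemma sum_transition x u : \sum_w P x u w = 1.
Proof. by case: (P_stochastic x u). Qed.

Lemma transition_absorbing x e u : e \in E -> P x e u = (e == u)%:R.
Proof.
move=> eE; have := sum_transition x e; rewrite (bigD1 e) //= P_absorbing // => S1.
have [<-|neq] := eqVneq e u; first by rewrite P_absorbing.
have S0 : \sum_(i | i != e) P x e i = 0 by lra.
by apply: (psumr_eq0P (fun i _ => transition_ge0 x e i) S0); rewrite eq_sym.
Qed.

Variable x : 'rV[R]_N.
Local Notation nstep := (nstep P x).

Lemma nstep_ge0 k u w : 0 <= nstep k u w.
Proof.
elim: k u => [|k IH] u /=; first by rewrite ler0n.
by apply: sumr_ge0 => i _; rewrite mulr_ge0 ?transition_ge0.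
Qed.

Lemma sum_nstep k u : \sum_w nstep k u w = 1.
Proof.
elim: k u => [|k IH] u /=.
  by rewrite -[RHS](sum_delta_l (fun=> 1) u); under [RHS]eq_bigr do rewrite mulr1.
rewrite exchange_big /= -(sum_transition x u); apply: eq_bigr => i _.
by rewrite -mulr_sumr IH mulr1.
Qed.

Lemma nstep_le1 k u w : nstep k u w <= 1.
Proof.
rewrite -(sum_nstep k u) (bigD1 w) //= lerDl.
by apply: sumr_ge0 => i _; exact: nstep_ge0.
Qed.

Lemma nstep1 u w : nstep 1 u w = P x u w.
Proof. by rewrite /= sum_delta_r. Qed.

Lemma nstepD m k u w : nstep (m + k) u w = \sum_u' nstep m u u' * nstep k u' w.
Proof.
elim: m u => [|m IH] u; first by rewrite add0n /= sum_delta_l.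
rewrite addSn /=; under eq_bigr do rewrite IH mulr_sumr.
rewrite exchange_big /=; apply: eq_bigr => i _.
by rewrite mulr_suml; apply: eq_bigr => j _; rewrite mulrA.
Qed.

Lemma nstep_absorbing k e w : e \in E -> nstep k e w = (e == w)%:R.
Proof.
move=> eE; elim: k => [|k IH] //=.
by under eq_bigr do rewrite transition_absorbing //; rewrite sum_delta_l IH.
Qed.

Definition unabsorbed k u := \sum_(w in ~: E) nstep k u w.

Lemma unabsorbedE k u : unabsorbed k u = \sum_w nstep k u w * (w \in ~: E)%:R.
Proof.
rewrite /unabsorbed big_mkcond /=; apply: eq_bigr => i _.
by case: (i \in ~: E); rewrite ?mulr1 ?mulr0.
Qed.

Lemma unabsorbed0 u : unabsorbed 0 u = (u \in ~: E)%:R.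
Proof. by rewrite unabsorbedE sum_delta_l. Qed.

Lemma unabsorbed_ge0 k u : 0 <= unabsorbed k u.
Proof. by apply: sumr_ge0 => i _; exact: nstep_ge0. Qed.

Lemma unabsorbed_le1 k u : unabsorbed k u <= 1.
Proof.
rewrite unabsorbedE -[leRHS](sum_nstep k u); apply: ler_sum => i _.
by case: (i \in ~: E); rewrite ?mulr1 ?mulr0 ?nstep_ge0.
Qed.

Lemma unabsorbed_absorbing k e : e \in E -> unabsorbed k e = 0.
Proof.
move=> eE; apply: big1 => i; rewrite inE => iE.
by rewrite nstep_absorbing //; case: eqP iE => // <-; rewrite eE.
Qed.

Lemma unabsorbedD m k u :
  unabsorbed (m + k) u = \sum_u' nstep m u u' * unabsorbed k u'.
Proof.
rewrite /unabsorbed; under eq_bigr do rewrite nstepD.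
by rewrite exchange_big /=; apply: eq_bigr => i _; rewrite mulr_sumr.
Qed.

Lemma unabsorbed_contract n0 z m u : (forall u, unabsorbed n0 u <= z) ->
  unabsorbed (m + n0) u <= z * unabsorbed m u.
Proof.
move=> Hz; rewrite unabsorbedD unabsorbedE mulr_sumr; apply: ler_sum => i _.
have [iE|iE] := boolP (i \in E); first by rewrite unabsorbed_absorbing ?inE ?iE ?mulr0.
by rewrite inE iE mulr1 mulrC ler_wpM2r ?nstep_ge0.
Qed.

Lemma unabsorbed_geometric n0 rho : (0 < n0)%N -> 0 < rho <= 1 ->
  (forall u, unabsorbed n0 u <= rho ^+ n0) ->
  forall k u, unabsorbed k u <= (rho ^+ n0)^-1 * rho ^+ k.
Proof.
move=> n0_gt0 /andP[rho0 rho1] Hz.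
have rho_n0 : 0 < rho ^+ n0 by exact: exprn_gt0.
elim/ltn_ind => k IH u; have [kn0|n0k] := ltnP k n0.
  apply: le_trans (unabsorbed_le1 k u) _.
  rewrite -(mulVf (lt0r_neq0 rho_n0)); apply: ler_wpM2l; first by rewrite invr_ge0 ltW.
  by apply: ler_wiXn2l; [exact: ltW | exact: rho1 | exact: ltnW].
rewrite -(subnK n0k); apply: le_trans (unabsorbed_contract (k - n0) u Hz) _.
rewrite exprD mulrA [_ * rho ^+ n0]mulrC.
by apply: ler_pM => //; [exact: exprn_ge0 (ltW rho0) | exact: unabsorbed_ge0 | apply: IH; lia].
Qed.

Lemma nstep_absorbing_nondecreasing e u : e \in E ->
  nondecreasing_seq (fun k => nstep k u e).
Proof.
move=> eE; apply/nondecreasing_seqP => n; rewrite -addn1 nstepD.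
under eq_bigr do rewrite nstep1.
rewrite (bigD1 e) //= P_absorbing // mulr1 lerDl.
by apply: sumr_ge0 => i _; rewrite mulr_ge0 ?nstep_ge0 ?transition_ge0.
Qed.

Lemma nstepD_absorbing_le e n k u : e \in E ->
  nstep (n + k) u e <= nstep n u e + unabsorbed n u.
Proof.
move=> eE; rewrite nstepD unabsorbedE -[X in X + _](sum_delta_r (nstep n u) e).
rewrite -big_split /=; apply: ler_sum => i _; rewrite -mulrDr ler_wpM2l ?nstep_ge0 //.
have [iE|iE] := boolP (i \in E); first by rewrite nstep_absorbing // finset.in_setC iE addr0.
have /negbTE -> : i != e by apply: contraNneq iE => ->.
by rewrite finset.in_setC iE add0r nstep_le1.
Qed.

Lemma cvgn_nstep_absorbing e u : e \in E -> cvgn (fun k => nstep k u e).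
Proof.
move=> eE; apply: nondecreasing_is_cvgn; first exact: nstep_absorbing_nondecreasing.
by exists 1 => _ [k _ <-]; exact: nstep_le1.
Qed.

Lemma nstep_le_absorb_prob e u n : e \in E -> nstep n u e <= absorb_prob P x u e.
Proof.
move=> eE; apply: nondecreasing_cvgn_le; first exact: nstep_absorbing_nondecreasing.
exact: cvgn_nstep_absorbing.
Qed.

Lemma absorb_prob_le e u n : e \in E -> absorb_prob P x u e <= nstep n u e + unabsorbed n u.
Proof.
move=> eE; apply: limr_le; first exact: cvgn_nstep_absorbing.
near=> k; rewrite -(subnKC (_ : n <= k)%N); first exact: nstepD_absorbing_le.
by near: k; exists n.
Unshelve. all: by end_near.
Qed.

Lemma dist_nstep_mu_infty n u w :
  `|nstep n u w - mu_infty P E x u w| <= unabsorbed n u.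
Proof.
rewrite /mu_infty; case: ifP => wE.
  have := nstep_le_absorb_prob u n wE; have := absorb_prob_le u n wE.
  by rewrite ler_norml; lra.
rewrite subr0 ger0_norm ?nstep_ge0 // /unabsorbed (bigD1 w) ?inE ?wE //= lerDl.
by apply: sumr_ge0 => i _; exact: nstep_ge0.
Qed.

End AbsorbingChain.

Lemma unabsorbed_uniform_geometric (R : realType) (N : nat) (chi : finType)
    (P : 'rV[R]_N -> chi -> chi -> R) (E : {set chi}) :
  stochastic P -> (forall e x, e \in E -> P x e e = 1) ->
  (exists (n0 : nat) (z0 : R), (1 <= n0)%N /\ z0 < 1 /\
     forall x v, \sum_(w in ~: E) nstep P x n0 v w <= z0) ->
  exists rho C : R, [/\ 0 < rho, rho < 1, 0 <= C &
    forall x k u, unabsorbed P E x k u <= C * rho ^+ k].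
Proof.
move=> P_st P_abs [n0 [z0 [n0_gt0 [z0_lt1 Hz0]]]].
have [rho [rho0 rho1 z0_rho]] := exists_root_ge n0_gt0 z0_lt1.
exists rho, (rho ^+ n0)^-1; split=> //; first by rewrite invr_ge0 exprn_ge0 // ltW.
move=> x; apply: unabsorbed_geometric => //; first by rewrite rho0 ltW.
by move=> u; exact: le_trans (Hz0 x u) z0_rho.
Qed.

Section PowerIntegral.
Variable R : realType.
Local Notation mu := (@lebesgue_measure R).

Lemma is_derive_pow_sub (C t s : R) n :
  is_derive s 1 (fun r => - (C / n.+1%:R) * (t - r) ^+ n.+1) (C * (t - s) ^+ n).
Proof.
have dsub : is_derive s (1 : R) (fun r => t - r) (-1).
  by have := is_deriveB (is_derive_cst t s 1) (is_derive_id s (1 : R)); rewrite sub0r.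
have -> : C * (t - s) ^+ n =
    - (C / n.+1%:R) *: ((n.+1%:R * (t - s) ^+ n.+1.-1) *: (-1)).
  by rewrite /GRing.scale /=; field.
have -> : (fun r => - (C / n.+1%:R) * (t - r) ^+ n.+1) =
    - (C / n.+1%:R) \*: (fun r => t - r) ^+ n.+1.
  by apply/funext => r /=; rewrite exprfctE.
exact: is_deriveZ _ (is_deriveX _ dsub).
Qed.

Lemma continuous_scaled_pow_sub (C t : R) n : continuous (fun s => C * (t - s) ^+ n).
Proof.
move=> s; apply: cvgM; first exact: cvg_cst.
apply: (@continuous_comp _ _ _ (fun r => t - r) (fun r => r ^+ n)).
  by apply: cvgB; [exact: cvg_cst | exact: cvg_id].
exact: exprn_continuous.
Qed.

Lemma integral_pow_sub (C t tau : R) n : tau <= t ->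
  (\int[mu]_(s in `[tau, t]) (C * (t - s) ^+ n)%:E)%E
   = (C * ((t - tau) ^+ n.+1 / n.+1%:R))%:E.
Proof.
rewrite le_eqVlt => /orP[/eqP ->|tau_t].
  by rewrite set_itv1 integral_set1 subrr expr0n /= mul0r mulr0.
pose F s := - (C / n.+1%:R) * (t - s) ^+ n.+1.
have cF : continuous F by exact: continuous_scaled_pow_sub.
rewrite (continuous_FTC2 _ _ (F := F)) //.
- by rewrite -EFinB /F subrr expr0n /= mulr0 sub0r; congr EFin; field.
- by apply: continuous_in_subspaceT => s _; exact: continuous_scaled_pow_sub.
- split; first by move=> s _; exact: @ex_derive _ _ _ _ _ _ _ (is_derive_pow_sub C t s n).
  + exact: cvg_at_right_filter (cF tau).
  + exact: cvg_at_left_filter (cF t).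
- by move=> s _; rewrite derive1E (@derive_val _ _ _ _ _ _ _ (is_derive_pow_sub C t s n)).
Qed.

(* The integral of a nonnegative function is a supremum over the simple functions
   below it, so it is monotone even without measurability. *)
Lemma ge0_le_integral_nonmeasurable (D : set R) (f g : R -> R) :
  (forall s, D s -> 0 <= f s) -> (forall s, D s -> f s <= g s) ->
  (\int[mu]_(s in D) (f s)%:E <= \int[mu]_(s in D) (g s)%:E)%E.
Proof.
move=> f0 fg; have g0 s (Ds : D s) := le_trans (f0 s Ds) (fg s Ds).
rewrite ge0_integralE => [|s Ds]; last by rewrite lee_fin f0.
rewrite ge0_integralE => [|s Ds]; last by rewrite lee_fin g0.
apply: ereal_sup_le => _ [h hf <-]; exists h => //= y.
apply: le_trans (hf y) _; rewrite /patch; case: ifP => // /[!inE] Dy.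
by rewrite lee_fin fg.
Qed.

Lemma Rintegral_pow_sandwich (A B t tau : R) n (f : R -> R) : tau <= t -> 0 <= A ->
  (forall s, tau <= s <= t -> A * (t - s) ^+ n <= f s <= B * (t - s) ^+ n) ->
  A * ((t - tau) ^+ n.+1 / n.+1%:R) <= Rintegral mu `[tau, t] f <=
  B * ((t - tau) ^+ n.+1 / n.+1%:R).
Proof.
move=> tau_t A0 Hf.
have itv s : `[tau, t]%classic s -> tau <= s <= t by rewrite /= in_itv.
have lo0 s : `[tau, t]%classic s -> 0 <= A * (t - s) ^+ n.
  by move=> /itv /andP[_ st]; rewrite mulr_ge0 ?exprn_ge0 ?subr_ge0.
have flo s (Ds : `[tau, t]%classic s) := proj1 (andP (Hf s (itv s Ds))).
have fhi s (Ds : `[tau, t]%classic s) := proj2 (andP (Hf s (itv s Ds))).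
have lo := ge0_le_integral_nonmeasurable lo0 flo.
have hi := ge0_le_integral_nonmeasurable (fun s Ds => le_trans (lo0 s Ds) (flo s Ds)) fhi.
rewrite !integral_pow_sub // in lo hi.
rewrite /Rintegral; set I := (\int[mu]_(x in _) _)%E in lo hi *.
have I_fin : I \is a fin_num.
  rewrite ge0_fin_numE; first exact: le_lt_trans hi (ltry _).
  apply: le_trans lo; rewrite lee_fin mulr_ge0 // divr_ge0 ?exprn_ge0 ?subr_ge0 //.
by move: lo hi; rewrite -(fineK I_fin) !lee_fin /= => -> ->.
Qed.
End PowerIntegral.

Section PoissonWeights.
Variable R : realType.
Implicit Types (z lam t tau s : R) (n : nat).

Definition poisson_weight z n : R := expR (- z) * (z ^+ n / n`!%:R).

Lemma series_exp_coeffE z : series (exp_coeff z) = (fun m => \sum_(n < m) z ^+ n / n`!%:R).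
Proof. by apply/funext => m; rewrite /series /= big_mkord. Qed.

Lemma sum_exp_coeff_le z m : 0 <= z -> \sum_(n < m) z ^+ n / n`!%:R <= expR z.
Proof.
move=> z0; have -> : \sum_(n < m) z ^+ n / n`!%:R = series (exp_coeff z) m.
  by rewrite series_exp_coeffE.
apply: nondecreasing_cvgn_le; last exact: is_cvg_series_exp_coeff.
by apply: nondecreasing_series => n _ _; exact: exp_coeff_ge0.
Qed.

Lemma poisson_weight_ge0 z n : 0 <= z -> 0 <= poisson_weight z n.
Proof. by move=> z0; rewrite mulr_ge0 ?expR_ge0 ?divr_ge0 ?exprn_ge0. Qed.

Lemma sum_poisson_weight_le1 z m : 0 <= z -> \sum_(n < m) poisson_weight z n <= 1.
Proof.
move=> z0; rewrite /poisson_weight -mulr_sumr -[leRHS](expRxMexpNx_1 z) [leRHS]mulrC.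
by apply: ler_wpM2l; [exact: expR_ge0 | exact: sum_exp_coeff_le].
Qed.

Lemma sum_poisson_weight_geometric z r m : 0 <= z -> 0 <= r ->
  \sum_(n < m) poisson_weight z n * r ^+ n <= expR (- (z * (1 - r))).
Proof.
move=> z0 r0; rewrite /poisson_weight; have -> : - (z * (1 - r)) = - z + z * r by ring.
rewrite expRD; under eq_bigr do rewrite -mulrA.
rewrite -mulr_sumr; apply: ler_wpM2l; first exact: expR_ge0.
apply: le_trans (sum_exp_coeff_le m (mulr_ge0 z0 r0)); rewrite le_eqVlt; apply/orP; left.
by apply/eqP/eq_bigr => n _; rewrite exprMn mulrAC.
Qed.

Lemma sum_poisson_weight_affine_geometric z (D C r : R) m :
  0 <= z -> 0 <= D -> 0 <= C -> 0 <= r ->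
  \sum_(n < m) poisson_weight z n * (D + C * r ^+ n) <= D + C * expR (- (z * (1 - r))).
Proof.
move=> z0 D0 C0 r0; under eq_bigr do rewrite mulrDr mulrCA.
rewrite big_split /=; apply: lerD.
  by rewrite -mulr_suml -[leRHS]mul1r ler_wpM2r // sum_poisson_weight_le1.
by rewrite -mulr_sumr ler_wpM2l // sum_poisson_weight_geometric.
Qed.

Lemma cvg_series_poisson_weight z : series (poisson_weight z) @ \oo --> (1 : R).
Proof.
rewrite -[X in _ --> X](expRxMexpNx_1 z) [X in _ --> X]mulrC.
have -> : series (poisson_weight z) = (fun m => expR (- z) * series (exp_coeff z) m).
  by apply/funext => m; rewrite seriesEord series_exp_coeffE /= mulr_sumr.
by apply: cvgM; [exact: cvg_cst | exact: is_cvg_series_exp_coeff].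
Qed.

(* The density of the first ring after tau, times the weight of n further rings in
   (s, t], integrates to the weight of n + 1 rings in (tau, t]. *)
Lemma Rintegral_poisson_sandwich lam tau t n (A B : R) (f : R -> R) :
  0 <= lam -> tau <= t -> 0 <= A ->
  (forall s, tau <= s <= t ->
     A * (lam * expR (- lam * (s - tau)) * poisson_weight (lam * (t - s)) n) <= f s <=
     B * (lam * expR (- lam * (s - tau)) * poisson_weight (lam * (t - s)) n)) ->
  A * poisson_weight (lam * (t - tau)) n.+1 <= Rintegral lebesgue_measure `[tau, t] f <=
  B * poisson_weight (lam * (t - tau)) n.+1.
Proof.
move=> lam0 tau_t A0 Hf.
set c := lam ^+ n.+1 * expR (- (lam * (t - tau))) / n`!%:R.
have c0 : 0 <= c by rewrite !mulr_ge0 ?invr_ge0 ?exprn_ge0 ?expR_ge0.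
have densityE s : lam * expR (- lam * (s - tau)) * poisson_weight (lam * (t - s)) n =
    c * (t - s) ^+ n.
  rewrite /c; have -> : expR (- (lam * (t - tau))) = expR (- lam * (s - tau)) * expR (- (lam * (t - s))).
    by rewrite -expRD; congr expR; ring.
  by rewrite /poisson_weight exprMn exprS; ring.
have weightE : poisson_weight (lam * (t - tau)) n.+1 = c * ((t - tau) ^+ n.+1 / n.+1%:R).
  rewrite /c /poisson_weight factS natrM exprMn; field.
  by rewrite pnatr_eq0 -lt0n fact_gt0 andbT.
rewrite weightE !(mulrA _ c); apply: Rintegral_pow_sandwich; [done | exact: mulr_ge0 |].
by move=> s /Hf; rewrite densityE !(mulrA _ c).
Qed.

End PoissonWeights.

Section Norm1.
Variables (R : realType) (N : nat).
Implicit Types w : 'rV[R]_N.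

Lemma norm1_0 : norm1 (0 : 'rV[R]_N) = 0.
Proof. by rewrite /norm1 big1 // => i _; rewrite mxE normr0. Qed.

Lemma ler_norm1D w1 w2 : norm1 (w1 + w2) <= norm1 w1 + norm1 w2.
Proof. by rewrite /norm1 -big_split /=; apply: ler_sum => i _; rewrite mxE ler_normD. Qed.

Lemma is_derive_rV_coord (f : R -> 'rV[R]_N) (s : R) (df : 'rV[R]_N) (i : 'I_N) :
  is_derive s (1 : R) f df -> is_derive s (1 : R) (fun r => f r ord0 i) (df ord0 i).
Proof.
move=> fdf; have f_der := @ex_derive _ _ _ _ _ _ _ fdf.
apply: DeriveDef; first exact: (proj1 (derivable_mxP _ _ _) f_der) ord0 i.
by rewrite -(@derive_val _ _ _ _ _ _ _ fdf) derive_mx // mxE.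
Qed.

Lemma norm1_increment_le (f df : R -> 'rV[R]_N) M r :
  (forall s, is_derive s (1 : R) f (df s)) -> (forall s, norm1 (df s) <= M) -> 0 <= r ->
  norm1 (f r - f 0) <= M * r.
Proof.
move=> fdf dfM r0.
pose sg i := Num.sg ((f r - f 0) ord0 i).
pose g s := \sum_(i < N) sg i * f s ord0 i.
have gdg s : is_derive s (1 : R) g (\sum_(i < N) sg i * df s ord0 i).
  have -> : g = \sum_(i < N) (fun s => sg i * f s ord0 i).
    by apply/funext => z; rewrite /g fct_sumE.
  exact: is_derive_sum (fun i => is_deriveZ (sg i) (is_derive_rV_coord i (fdf s))).
have gc : {within `[0, r], continuous g}.
  apply: continuous_in_subspaceT => s _; apply: differentiable_continuous.
  by rewrite -derivable1_diffP; exact: @ex_derive _ _ _ _ _ _ _ (gdg s).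
have -> : norm1 (f r - f 0) = g r - g 0.
  rewrite /g /norm1 -sumrB; apply: eq_bigr => i _.
  by rewrite normrEsg -/(sg i) !mxE mulrBr.
have [c _ ->] := MVT_segment r0 (fun s _ => gdg s) gc.
rewrite subr0 ler_wpM2r //; apply: le_trans (dfM c); apply: ler_sum => i _.
rewrite (le_trans (ler_norm _)) // normrM -[leRHS]mul1r ler_wpM2r //.
by rewrite /sg normr_sg; case: (_ == 0).
Qed.

End Norm1.

Section FrozenCoefficients.
Variables (R : realType) (N : nat) (chi : finType).
Variables (a : 'rV[R]_N -> chi -> 'rV[R]_N) (P : 'rV[R]_N -> chi -> chi -> R).
Variables (E : {set chi}) (flow : chi -> R -> 'rV[R]_N -> 'rV[R]_N).
Hypothesis P_stochastic : stochastic P.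
Hypothesis P_absorbing : forall e x, e \in E -> P x e e = 1.
Hypothesis flow_derive : forall u y (s : R),
  is_derive s (1 : R) (fun r => flow u r y) (a (flow u s y) u).
Hypothesis flow0 : forall u y, flow u 0 y = y.
Variables (M K0 : R).
Hypothesis M_ge0 : 0 <= M.
Hypothesis a_bounded : forall v y, norm1 (a y v) <= M.
Hypothesis K0_ge0 : 0 <= K0.
Hypothesis P_lipschitz : forall x x' v,
  \sum_(w : chi) `|P x v w - P x' v w| <= K0 * norm1 (x - x').

Lemma flow_dist_le x u y r : 0 <= r ->
  norm1 (flow u r y - x) <= norm1 (y - x) + M * r.
Proof.
move=> r0; rewrite -[flow u r y - x](subrKA y) addrC.
apply: le_trans (ler_norm1D _ _) _; rewrite lerD2l.
have := norm1_increment_le (fun s => flow_derive u y s) (fun s => a_bounded u _) r0.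
by rewrite flow0.
Qed.

Lemma transition_expectation_lipschitz x y u (g : chi -> R) :
  (forall u', 0 <= g u' <= 1) ->
  `|\sum_u' P y u u' * g u' - \sum_u' P x u u' * g u'| <=
    (u \in ~: E)%:R * (K0 * norm1 (y - x)).
Proof.
move=> g01; have [uE|uE] := boolP (u \in E).
  under eq_bigr do rewrite (transition_absorbing P_stochastic P_absorbing _ _ uE).
  under [X in _ - X]eq_bigr do rewrite (transition_absorbing P_stochastic P_absorbing _ _ uE).
  by rewrite subrr normr0 finset.in_setC uE mul0r.
rewrite finset.in_setC uE mul1r -sumrB; apply: le_trans (ler_norm_sum _ _ _) _.
apply: le_trans (P_lipschitz y x u); apply: ler_sum => u' _.
have /andP[g0 g1] := g01 u'.
by rewrite -mulrBl normrM (ger0_norm g0) -[leRHS]mulr1; apply: ler_wpM2l.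
Qed.

Variables (x : 'rV[R]_N) (lam t : R) (w : chi).
Hypotheses (lam_ge0 : 0 <= lam) (t_ge0 : 0 <= t).

Let delta := K0 * (M * t).

Let delta_ge0 : 0 <= delta.
Proof. by rewrite !mulr_ge0. Qed.

Lemma transition_expectation_drift y u (g : chi -> R) : norm1 (y - x) <= M * t ->
  (forall u', 0 <= g u' <= 1) ->
  `|\sum_u' P y u u' * g u' - \sum_u' P x u u' * g u'| <= (u \in ~: E)%:R * delta.
Proof.
move=> yx g01; apply: le_trans (transition_expectation_lipschitz x y u g01) _.
by rewrite ler_wpM2l ?ler0n ?ler_wpM2l.
Qed.

Definition drift_error n u := delta * \sum_(k < n) unabsorbed P E x k u.

(* Bounds on the probability of reaching w after n steps when the matrix follows the
   position; they are clamped to [0, 1] so that transition_expectation_drift applies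
   to them at the next step. *)
Definition lower_profile n u := Num.max 0 (nstep P x n u w - drift_error n u).

Definition upper_profile n u := Num.min 1 (nstep P x n u w + drift_error n u).

Lemma drift_error_ge0 n u : 0 <= drift_error n u.
Proof. by rewrite mulr_ge0 // sumr_ge0 // => k _; exact: unabsorbed_ge0. Qed.

Lemma drift_errorS n u :
  drift_error n.+1 u = (u \in ~: E)%:R * delta + \sum_u' P x u u' * drift_error n u'.
Proof.
rewrite /drift_error big_ord_recl unabsorbed0 mulrDr mulrC; congr (_ + _).
under eq_bigr => i _ do rewrite lift0 -add1n unabsorbedD.
rewrite mulr_sumr; under eq_bigr do rewrite mulr_sumr.
rewrite exchange_big; apply: eq_bigr => u' _.
by rewrite nstep1 !mulr_sumr; apply: eq_bigr => k _; ring.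
Qed.

Lemma lower_profile01 n u : 0 <= lower_profile n u <= 1.
Proof.
rewrite le_max lexx ge_max ler01 /=.
by have := drift_error_ge0 n u; have := nstep_le1 P_stochastic x n u w; lra.
Qed.

Lemma upper_profile01 n u : 0 <= upper_profile n u <= 1.
Proof.
rewrite le_min ler01 ge_min lexx /=.
by have := drift_error_ge0 n u; have := nstep_ge0 P_stochastic x n u w; lra.
Qed.

Lemma lower_profileS_le n y u : norm1 (y - x) <= M * t ->
  lower_profile n.+1 u <= \sum_u' P y u u' * lower_profile n u'.
Proof.
move=> yx; rewrite /lower_profile ge_max; apply/andP; split.
  apply: sumr_ge0 => i _; have /andP[l0 _] := lower_profile01 n i.
  by rewrite mulr_ge0 ?transition_ge0.
have := transition_expectation_drift u yx (lower_profile01 n).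
have : \sum_u' P x u u' * nstep P x n u' w - \sum_u' P x u u' * drift_error n u' <=
    \sum_u' P x u u' * lower_profile n u'.
  rewrite -sumrB; apply: ler_sum => i _; rewrite -mulrBr ler_wpM2l ?transition_ge0 //.
  by rewrite le_max lexx orbT.
have : nstep P x n.+1 u w = \sum_u' P x u u' * nstep P x n u' w by [].
have := drift_errorS n u; rewrite ler_norml; lra.
Qed.

Lemma upper_profileS_ge n y u : norm1 (y - x) <= M * t ->
  \sum_u' P y u u' * upper_profile n u' <= upper_profile n.+1 u.
Proof.
move=> yx; rewrite [leRHS]/upper_profile le_min; apply/andP; split.
  rewrite -(sum_transition P_stochastic y u); apply: ler_sum => i _.
  have /andP[_ h1] := upper_profile01 n i.
  by rewrite -[leRHS]mulr1 ler_wpM2l ?transition_ge0.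
have := transition_expectation_drift u yx (upper_profile01 n).
have : \sum_u' P x u u' * upper_profile n u' <=
    \sum_u' P x u u' * nstep P x n u' w + \sum_u' P x u u' * drift_error n u'.
  rewrite -big_split /=; apply: ler_sum => i _; rewrite -mulrDr ler_wpM2l ?transition_ge0 //.
  by rewrite ge_min lexx orbT.
have : nstep P x n.+1 u w = \sum_u' P x u u' * nstep P x n u' w by [].
have := drift_errorS n u; rewrite ler_norml; lra.
Qed.

Definition bracketed n := forall tau y u, 0 <= tau <= t -> norm1 (y - x) <= M * tau ->
  poisson_weight (lam * (t - tau)) n * lower_profile n u <=
    path_term P flow lam t w n tau y u <=
  poisson_weight (lam * (t - tau)) n * upper_profile n u.

Lemma bracketed0 : bracketed 0.
Proof.
move=> tau y u _ _; rewrite /lower_profile /upper_profile /drift_error big_ord0 mulr0.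
rewrite subr0 addr0 /poisson_weight expr0 fact0 divr1 mulr1 /=.
by case: (u == w); rewrite /= mulNr ?maxxx ?minxx ?max_r ?min_r ?ler01 ?lexx.
Qed.

Lemma bracketedS n : bracketed n -> bracketed n.+1.
Proof.
move=> IH tau y u /andP[tau0 tau_t] yx /=.
have /andP[lo0 _] := lower_profile01 n.+1 u.
rewrite ![poisson_weight _ _ * _]mulrC.
apply: Rintegral_poisson_sandwich => // s /andP[tau_s s_t].
set ys := flow u (s - tau) y.
have ys_x : norm1 (ys - x) <= M * s.
  apply: le_trans (flow_dist_le x u y _) _; first by rewrite subr_ge0.
  by rewrite mulrBr; lra.
have ys_xt : norm1 (ys - x) <= M * t by apply: le_trans ys_x (ler_wpM2l M_ge0 s_t).
have s_in : 0 <= s <= t by rewrite s_t andbT (le_trans tau0).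
set k := lam * expR (- lam * (s - tau)).
have k0 : 0 <= k by rewrite mulr_ge0 ?expR_ge0.
set p := poisson_weight (lam * (t - s)) n.
have p0 : 0 <= p by rewrite poisson_weight_ge0 ?mulr_ge0 ?subr_ge0.
have lo : p * lower_profile n.+1 u <= \sum_u' P ys u u' * path_term P flow lam t w n s ys u'.
  apply: le_trans (ler_wpM2l p0 (lower_profileS_le n u ys_xt)) _.
  rewrite mulr_sumr; apply: ler_sum => i _; rewrite mulrCA ler_wpM2l ?transition_ge0 //.
  by case/andP: (IH s ys i s_in ys_x).
have hi : \sum_u' P ys u u' * path_term P flow lam t w n s ys u' <= p * upper_profile n.+1 u.
  apply: le_trans (ler_wpM2l p0 (upper_profileS_ge n u ys_xt)).
  rewrite mulr_sumr; apply: ler_sum => i _; rewrite mulrCA ler_wpM2l ?transition_ge0 //.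
  by case/andP: (IH s ys i s_in ys_x).
rewrite [lower_profile _ _ * _]mulrC [upper_profile _ _ * _]mulrC -!(mulrA k).
by apply/andP; split; apply: ler_wpM2l.
Qed.

Lemma path_term_bracketed n : bracketed n.
Proof. by elim: n => [|n IH]; [exact: bracketed0 | exact: bracketedS]. Qed.

Lemma path_term_from_start_bracketed n v :
  poisson_weight (lam * t) n * lower_profile n v <= path_term P flow lam t w n 0 x v <=
  poisson_weight (lam * t) n * upper_profile n v.
Proof.
have x_in : (0 : R) <= 0 <= t by rewrite lexx t_ge0.
have x_x : norm1 (x - x) <= M * 0 by rewrite subrr norm1_0 mulr0.
by have := @path_term_bracketed n 0 x v x_in x_x; rewrite subr0.
Qed.

Lemma cvgn_series_path_term v : cvgn (series (fun n => path_term P flow lam t w n 0 x v)).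
Proof.
have z0 : 0 <= lam * t by rewrite mulr_ge0.
apply: (series_le_cvg (v_ := poisson_weight (lam * t))) => [n|n|n|].
- have /andP[+ _] := path_term_from_start_bracketed n v; apply: le_trans.
  by have /andP[? _] := lower_profile01 n v; rewrite mulr_ge0 ?poisson_weight_ge0.
- exact: poisson_weight_ge0.
- have /andP[_] := path_term_from_start_bracketed n v; move/le_trans; apply.
  have /andP[_ ?] := upper_profile01 n v.
  by rewrite -[leRHS]mulr1 ler_wpM2l ?poisson_weight_ge0.
- exact: cvgP (cvg_series_poisson_weight _).
Qed.

Variables (rho C : R).
Hypotheses (rho_gt0 : 0 < rho) (rho_lt1 : rho < 1) (C_ge0 : 0 <= C).
Hypothesis unabsorbed_le : forall k u, unabsorbed P E x k u <= C * rho ^+ k.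

Lemma drift_error_le n u : drift_error n u <= delta * (C / (1 - rho)).
Proof.
apply: ler_wpM2l => //.
have rho1 : `|rho| < 1 by rewrite gtr0_norm.
apply: le_trans (geometric_le_lim n C_ge0 rho_gt0 rho1).
by rewrite seriesEord /=; apply: ler_sum => k _; exact: unabsorbed_le.
Qed.

Lemma dist_path_term_poisson n v :
  `|path_term P flow lam t w n 0 x v - poisson_weight (lam * t) n * mu_infty P E x v w| <=
  poisson_weight (lam * t) n * (delta * (C / (1 - rho)) + C * rho ^+ n).
Proof.
have /andP[pt_lo pt_hi] := path_term_from_start_bracketed n v.
set p := poisson_weight (lam * t) n in pt_lo pt_hi *.
have p0 : 0 <= p by rewrite poisson_weight_ge0 ?mulr_ge0.
set q := mu_infty P E x v w; set e := delta * (C / (1 - rho)) + C * rho ^+ n.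
have := dist_nstep_mu_infty P_stochastic P_absorbing x n v w; rewrite -/q ler_norml.
move=> /andP[q_lo q_hi]; have := unabsorbed_le n v; have := drift_error_le n v.
have := drift_error_ge0 n v => ? ? ? .
have lo : p * q - p * e <= p * lower_profile n v.
  by rewrite -mulrBr ler_wpM2l // le_max; apply/orP; right; rewrite /e; lra.
have hi : p * upper_profile n v <= p * q + p * e.
  by rewrite -mulrDr ler_wpM2l // ge_min; apply/orP; right; rewrite /e; lra.
by rewrite ler_norml; apply/andP; split; lra.
Qed.

Lemma dist_mu_t_mu_infty v :
  `|mu_t P flow lam t x v w - mu_infty P E x v w| <=
  delta * (C / (1 - rho)) + C * expR (- (lam * t * (1 - rho))).
Proof.
have z0 : 0 <= lam * t by rewrite mulr_ge0.
set q := mu_infty P E x v w.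
apply: (dist_limn_le (v := fun m => series (poisson_weight (lam * t)) m * q)).
- exact: cvgn_series_path_term.
- rewrite -[X in _ --> X]mul1r; apply: cvgM; [exact: cvg_series_poisson_weight | exact: cvg_cst].
move=> m; rewrite !seriesEord /= mulr_suml -sumrB.
apply: le_trans (ler_norm_sum _ _ _) _.
apply: le_trans (ler_sum _ (fun (n : 'I_m) _ => dist_path_term_poisson n v)) _.
apply: sum_poisson_weight_affine_geometric => //; last exact: ltW.
by rewrite mulr_ge0 ?divr_ge0 ?subr_ge0 ?(ltW rho_lt1).
Qed.

End FrozenCoefficients.

Lemma TV_dist_le_card (R : realType) (chi : finType) (mu nu : chi -> R) (b : R) :
  (forall w, `|mu w - nu w| <= b) -> TV_dist mu nu <= #|chi|%:R * b.
Proof.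
by move=> H; rewrite /TV_dist -sum1_card natr_sum mulr_suml; apply: ler_sum => w _; rewrite mul1r.
Qed.

Theorem mainTheorem5 (R : realType) (N : nat) (chi : finType)
  (a : 'rV[R]_N -> chi -> 'rV[R]_N)
  (P : 'rV[R]_N -> chi -> chi -> R)
  (E : {set chi})
  (flow : chi -> R -> 'rV[R]_N -> 'rV[R]_N) :
  (* assumptions on a: continuous, bounded, globally Lipschitz *)
  (forall v, continuous (fun x => a x v)) ->
  (forall v, exists M : R, forall x, norm1 (a x v) <= M) ->
  (exists L : R, forall v x y, norm1 (a x v - a y v) <= L * norm1 (x - y)) ->
  (* flow u s y solves d/ds X_s = a(X_s, u), X_0 = y *)
  (forall u y, flow u 0 y = y) ->
  (forall u y (s : R), is_derive s (1 : R) (fun r => flow u r y) (a (flow u s y) u)) ->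
  (* (i) *)
  stochastic P ->
  (* (ii) *)
  (forall e x, e \in E -> P x e e = 1) ->
  (* (iii) *)
  (exists (n0 : nat) (z0 : R), (1 <= n0)%N /\ z0 < 1 /\
     forall x v, \sum_(w in ~: E) nstep P x n0 v w <= z0) ->
  (* (iv) *)
  (exists K0 : R, 0 < K0 /\ forall x x' v,
     \sum_(w : chi) `|P x v w - P x' v w| <= K0 * norm1 (x - x')) ->
  exists K c1 : R, 0 < K /\ 0 < c1 /\
    forall (x : 'rV[R]_N) (v : chi) (lam t : R), 0 < lam -> 0 < t ->
      TV_dist (mu_t P flow lam t x v) (mu_infty P E x v)
        <= K * expR (- c1 * t * lam) + K * t.
Proof.
move=> _ a_bounded _ flow0 flow_derive P_st P_abs decay [K0 [K0_gt0 P_lip]].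
have [M [M_ge0 HM]] := finite_uniform_ub a_bounded.
have [rho [C [rho_gt0 rho_lt1 C_ge0 unabs_le]]] := unabsorbed_uniform_geometric P_st P_abs decay.
set c := #|chi|%:R : R; set A := K0 * M * (C / (1 - rho)).
have A_ge0 : 0 <= A.
  apply: mulr_ge0; first by rewrite mulr_ge0 // ltW.
  by rewrite divr_ge0 // subr_ge0 ltW.
have cA_ge0 : 0 <= c * A by rewrite mulr_ge0 ?ler0n.
have cC_ge0 : 0 <= c * C by rewrite mulr_ge0 ?ler0n.
exists (c * A + c * C + 1), (1 - rho); split; [lra | split; first by rewrite subr_gt0].
move=> x v lam t lam_gt0 t_gt0.
apply: le_trans (TV_dist_le_card (fun w => dist_mu_t_mu_infty P_st P_abs flow_derive flow0
  M_ge0 HM (ltW K0_gt0) P_lip w (ltW lam_gt0) (ltW t_gt0) rho_gt0 rho_lt1 C_ge0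
  (unabs_le x) v)) _.
have -> : K0 * (M * t) * (C / (1 - rho)) = A * t by rewrite /A; ring.
have -> : - (1 - rho) * t * lam = - (lam * t * (1 - rho)) by ring.
have e_ge0 := expR_ge0 (- (lam * t * (1 - rho))).
rewrite -/c mulrDr addrC (mulrA c C) (mulrA c A).
by apply: lerD; apply: ler_wpM2r; lra.
Qed.
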